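(* Let $d\ge1$ and $n_1,\dots,n_d\ge1$ be integers, and let $G$ be the graph consisting of two vertices $v$ and $w$ joined by $d$ chains of lengths $n_1,\dots,n_d$ (the $k$-th chain is a path of $n_k$ edges from $v$ to $w$, and distinct chains share no vertices other than $v,w$). Then the pair $\{v,w\}$ has order $\mathrm{lcm}(n_1,\dots,n_d)\left(\frac1{n_1}+\dots+\frac1{n_d}\right)$.
   Context: Graphs may have multiple edges, no loops. For a graph with vertices $u_1,\dots,u_N$, let $c_{ij}$ ($i\neq j$) be the number of edges joining $u_i,u_j$, $c_{ii}=-\sum_{j\ne i}c_{ij}$, $M=(c_{ij})$. A pair $\{u_i,u_j\}$ has order $h>0$ if there is $S\in\mathbb{Z}^N$ with $MS=h(e_i-e_j)$ and $\gcd(s_1-s_N,\dots,s_{N-1}-s_N)=1$; equivalently, the class of $e_i-e_j$ in $\mathbb{Z}^N/\mathrm{Im}(M)$ has order exactly $h$. *)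

From HB Require Import structures.
From mathcomp Require Import all_boot all_order all_algebra.
Set Implicit Arguments. Unset Strict Implicit. Unset Printing Implicit Defensive.
Import Order.TTheory GRing.Theory Num.Theory.
Local Open Scope ring_scope.

(* A multigraph (multiple edges, no loops) on a finite vertex type V is given
   by its edge-multiplicity function c : V -> V -> nat; only the values
   c i j with i != j are used. *)

Definition Mentry (V : finType) (c : V -> V -> nat) (i j : V) : int :=
  if i == j then - (\sum_(l | l != i) (c i l)%:Z) else (c i j)%:Z.

Definition Mmul (V : finType) (c : V -> V -> nat) (S : V -> int) (i : V) : int :=
  \sum_(j : V) Mentry c i j * S j.

Definition in_imM (V : finType) (c : V -> V -> nat) (u : V -> int) : Prop :=
  exists S : V -> int, forall i, Mmul c S i = u i.

Definition hdiff (V : finType) (h : nat) (x y : V) (i : V) : int :=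
  h%:Z * ((i == x)%:Z - (i == y)%:Z).

(* the pair {x,y} has order h: the class of e_x - e_y in Z^V / Im(M) has order
   exactly h (h > 0). *)
Definition pair_order (V : finType) (c : V -> V -> nat) (x y : V) (h : nat) : Prop :=
  (0 < h)%N /\ in_imM c (hdiff h x y) /\
  (forall k : nat, (0 < k < h)%N -> ~ in_imM c (hdiff k x y)).

(* Vertices: inl false = v, inl true = w, and inr (k; j) = the (j+1)-th
   vertex of chain k (internal vertices of chain k are positions 1..n_k-1). *)
Definition chainV (d : nat) (n : 'I_d -> nat) : finType :=
  (bool + {k : 'I_d & 'I_(n k).-1})%type.

Definition chain_v (d : nat) (n : 'I_d -> nat) : chainV n := inl false.
Definition chain_w (d : nat) (n : 'I_d -> nat) : chainV n := inl true.

(* the vertex at position t (0 <= t <= n k) along chain k *)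
Definition chain_vertex (d : nat) (n : 'I_d -> nat) (k : 'I_d) (t : nat) : chainV n :=
  if t == 0%N then chain_v n
  else match (insub t.-1 : option 'I_(n k).-1) with
       | Some j => inr (existT (fun k : 'I_d => 'I_(n k).-1) k j)
       | None => chain_w n
       end.

Definition chain_c (d : nat) (n : 'I_d -> nat) (x y : chainV n) : nat :=
  \sum_(k < d) \sum_(t < n k)
     (((@chain_vertex d n k t == x) && (@chain_vertex d n k t.+1 == y))
      || ((@chain_vertex d n k t == y) && (@chain_vertex d n k t.+1 == x))).

From mathcomp Require Import all_boot all_order all_algebra.
From mathcomp Require Import zify.
Import Order.TTheory GRing.Theory Num.Theory.
Local Open Scope ring_scope.

Set Implicit Arguments.
Unset Strict Implicit.
Unset Printing Implicit Defensive.

(* If M S = m (e_v - e_w), the potential S is harmonic at every interior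
   vertex, hence affine along each chain: S w - S v = n_k s_k, where the slope
   s_k is the flow leaving v along chain k and m = s_1 + ... + s_d.  Thus
   D := S w - S v is a common multiple of the n_k, and m = D (1/n_1 + ... +
   1/n_d) is a positive multiple of lcm(n) (1/n_1 + ... + 1/n_d); the potential
   of slope lcm(n)/n_k on chain k attains this value. *)

Section Laplacian.
Context {V : finType}.

Lemma sum_delta (a : V) (F : V -> int) :
  \sum_y (a == y)%:Z * F y = F a.
Proof.
rewrite (bigD1 a) //= eqxx mul1r big1 ?addr0 // => y ya.
by rewrite eq_sym (negbTE ya) mul0r.
Qed.

Lemma Mmul_laplacian (c : V -> V -> nat) (S : V -> int) (x : V) :
  Mmul c S x = \sum_y (c x y)%:Z * (S y - S x).
Proof.
rewrite /Mmul (bigD1 x) //= /Mentry eqxx [RHS](bigD1 x) //= subrr mulr0 add0r.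
rewrite mulNr mulr_suml -sumrN addrC -big_split /=.
by apply: eq_bigr => y yx; rewrite eq_sym (negbTE yx) mulrBr.
Qed.

Lemma Mmul_sum (I : Type) (c : I -> V -> V -> nat) (r : seq I) (P : pred I)
    (S : V -> int) (x : V) :
  Mmul (fun y z => \sum_(i <- r | P i) c i y z) S x =
  \sum_(i <- r | P i) Mmul (c i) S x.
Proof.
rewrite Mmul_laplacian /=.
under eq_bigr => y _ do rewrite -natz natr_sum mulr_suml.
rewrite exchange_big; apply: eq_bigr => i _.
by rewrite Mmul_laplacian; under eq_bigr => y _ do rewrite natz.
Qed.

Definition edge (a b : V) (x y : V) : nat :=
  ((a == x) && (b == y)) || ((a == y) && (b == x)).

Lemma Mmul_edge (a b : V) (S : V -> int) (x : V) :
  Mmul (edge a b) S x =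
  (a == x)%:Z * (S b - S x) + (b == x)%:Z * (S a - S x).
Proof.
rewrite Mmul_laplacian; transitivity (\sum_y
  ((a == x)%:Z * ((b == y)%:Z * (S y - S x)) +
   (b == x)%:Z * ((a == y)%:Z * (S y - S x)))); last first.
  by rewrite big_split /= -!mulr_sumr !sum_delta.
apply: eq_bigr => y _.
have [->|yx] := eqVneq y x; first by rewrite subrr !mulr0.
rewrite /edge; have [->|_] := eqVneq a x; have [->|_] := eqVneq b x;
  by rewrite ?[x == y]eq_sym ?(negbTE yx) ?andbF ?andbT ?orbF /=
            ?mul0r ?mul1r ?addr0 ?add0r.
Qed.
End Laplacian.

Lemma sum_delta_ord (m a : nat) (F : nat -> int) : (a < m)%N ->
  \sum_(t < m) ((t : nat) == a)%:Z * F t = F a.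
Proof.
move=> lt_a; rewrite -[RHS](sum_delta (Ordinal lt_a) (fun t => F t)).
by apply: eq_bigr => t _; rewrite eq_sym.
Qed.

Lemma harmonic_linear (R : zmodType) (f : nat -> R) (m : nat) :
  (forall t, (t.+1 < m)%N -> f t.+2 - f t.+1 = f t.+1 - f t) ->
  forall t, (t <= m)%N -> f t - f 0 = (f 1 - f 0) *+ t.
Proof.
move=> step.
have incr t : (t < m)%N -> f t.+1 - f t = f 1 - f 0.
  by elim: t => [//|t IH] lt_t; rewrite step // IH //; apply: ltnW.
elim=> [|t IH] lt_t; first by rewrite subrr.
rewrite mulrS -IH; last exact: ltnW.
by rewrite -(incr t) // addrA subrK.
Qed.

Section Chains.
Variables (d : nat) (n : 'I_d -> nat).

Lemma chain_vertexS_neq_v k t : (chain_vertex n k t.+1 == chain_v n) = false.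
Proof. by rewrite /chain_vertex /=; case: insub. Qed.

Lemma chain_vertex_inner k t (lt_t : (t < (n k).-1)%N) :
  chain_vertex n k t.+1 = inr (Tagged _ (Ordinal lt_t)).
Proof. by rewrite /chain_vertex /= insubT. Qed.

Lemma chain_vertex_end k t :
  (n k <= t.+1)%N -> chain_vertex n k t.+1 = chain_w n.
Proof. by move=> ge_t; rewrite /chain_vertex /= insubF //; apply/negbTE; lia. Qed.

Lemma chain_vertex_eq_v k t : (chain_vertex n k t == chain_v n) = (t == 0)%N.
Proof. by case: t => [|t] //; rewrite chain_vertexS_neq_v. Qed.

Lemma chain_vertex_eq_w k t : (0 < n k)%N -> (t <= n k)%N ->
  (chain_vertex n k t == chain_w n) = (t == n k).
Proof.
case: t => [|t] n_gt0 le_t; first by move: n_gt0; case: (n k).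
have [lt_t|ge_t] := ltnP t (n k).-1; last by rewrite chain_vertex_end ?eqxx; lia.
by rewrite chain_vertex_inner; apply/esym/negbTE; lia.
Qed.

Lemma chain_vertex_eq_inner k t k' (j : 'I_(n k').-1) :
  (chain_vertex n k t == inr (Tagged _ j)) = (k == k') && (t == j.+1)%N.
Proof.
case: t => [|t]; first by rewrite andbF.
have [lt_t|ge_t] := ltnP t (n k).-1; last first.
  rewrite chain_vertex_end; last by lia.
  have [kk'|] //= := eqVneq k k'; subst k'.
  by apply/esym/negbTE; have := ltn_ord j; lia.
rewrite chain_vertex_inner; have [kk'|kk'] := eqVneq k k'.
  subst k'; have inrE (u v : {k : 'I_d & 'I_(n k).-1}) :
    (inr u == inr v :> chainV n) = (u == v) by [].
  by rewrite inrE eq_Tagged.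
apply/negbTE; apply: contra kk'.
pose chain_of (x : chainV n) := if x is inr p then tag p else k.
by move=> /eqP/(congr1 chain_of) /= ->.
Qed.

Lemma Mmul_chain (S : chainV n -> int) (x : chainV n) :
  Mmul (@chain_c d n) S x = \sum_k \sum_(t < n k)
    ((chain_vertex n k t == x)%:Z * (S (chain_vertex n k t.+1) - S x)
     + (chain_vertex n k t.+1 == x)%:Z * (S (chain_vertex n k t) - S x)).
Proof.
rewrite (Mmul_sum (fun k y z =>
  \sum_(t < n k) edge (chain_vertex n k t) (chain_vertex n k t.+1) y z)).
apply: eq_bigr => k _.
rewrite (Mmul_sum (fun t : 'I_(n k) =>
  edge (chain_vertex n k t) (chain_vertex n k t.+1))).
by apply: eq_bigr => t _; rewrite Mmul_edge.
Qed.

Hypothesis n_gt0 : forall k, (0 < n k)%N.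

Lemma Mmul_chain_v (S : chainV n -> int) :
  Mmul (@chain_c d n) S (chain_v n) =
  \sum_k (S (chain_vertex n k 1) - S (chain_v n)).
Proof.
rewrite Mmul_chain; apply: eq_bigr => k _.
under eq_bigr => t _ do rewrite !chain_vertex_eq_v /= mul0r addr0.
by rewrite (sum_delta_ord (fun t => S (chain_vertex n k t.+1) - S (chain_v n))).
Qed.

Lemma Mmul_chain_w (S : chainV n -> int) :
  Mmul (@chain_c d n) S (chain_w n) =
  \sum_k (S (chain_vertex n k (n k).-1) - S (chain_w n)).
Proof.
rewrite Mmul_chain; apply: eq_bigr => k _.
have n_pos := n_gt0 k.
under eq_bigr => t _.
  rewrite !chain_vertex_eq_w ?(ltnW (ltn_ord t)) ?(ltn_ord t) //.
  have -> : ((t : nat) == n k) = false by apply/negbTE; rewrite neq_ltn ltn_ord.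
  have -> : ((t : nat).+1 == n k) = ((t : nat) == (n k).-1).
    by apply/eqP/eqP; lia.
  rewrite mul0r add0r.
  over.
rewrite (sum_delta_ord (fun t => S (chain_vertex n k t) - S (chain_w n))) //.
by rewrite prednK.
Qed.

Lemma Mmul_chain_inner (S : chainV n -> int) k t : (t.+1 < n k)%N ->
  Mmul (@chain_c d n) S (chain_vertex n k t.+1) =
  (S (chain_vertex n k t.+2) - S (chain_vertex n k t.+1))
  + (S (chain_vertex n k t) - S (chain_vertex n k t.+1)).
Proof.
move=> lt_t; have lt_t' : (t < (n k).-1)%N by lia.
set x := chain_vertex n k t.+1.
have eq_x k' s : (chain_vertex n k' s == x) = (k' == k) && (s == t.+1)%N.
  by rewrite /x chain_vertex_inner chain_vertex_eq_inner.
rewrite Mmul_chain (bigD1 k) //= [X in _ + X]big1 => [|k' k'k]; last first.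
  by apply: big1 => s _; rewrite !eq_x (negbTE k'k) !mul0r addr0.
rewrite addr0; under eq_bigr => s _ do rewrite !eq_x eqxx eqSS.
rewrite big_split /=.
rewrite (sum_delta_ord (fun s => S (chain_vertex n k s.+1) - S x)) //.
by rewrite (sum_delta_ord (fun s => S (chain_vertex n k s) - S x)) // ltnW.
Qed.

Definition chain_potential (L : nat) (x : chainV n) : int :=
  match x with
  | inl b => if b then L%:Z else 0
  | inr p => ((val (tagged p)).+1 * (L %/ n (tag p)))%:Z
  end.

Lemma chain_potential_vertex L k t : (n k %| L)%N -> (t <= n k)%N ->
  chain_potential L (chain_vertex n k t) = (t * (L %/ n k))%:Z.
Proof.
case: t => [|t] nL le_t //.
have [lt_t|ge_t] := ltnP t (n k).-1; first by rewrite chain_vertex_inner.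
rewrite chain_vertex_end /=; last by lia.
have -> : t.+1 = n k by lia.
by rewrite mulnC divnK.
Qed.

Lemma chain_potential_solves L : (forall k, n k %| L)%N -> forall x,
  Mmul (@chain_c d n) (chain_potential L) x =
  hdiff (\sum_k L %/ n k) (chain_v n) (chain_w n) x.
Proof.
move=> nL [[]|[k [t lt_t]]]; rewrite /hdiff /=.
- rewrite Mmul_chain_w sub0r mulrN1 -natz natr_sum -sumrN.
  apply: eq_bigr => k _.
  rewrite chain_potential_vertex ?leq_pred //= natz.
  set q := (L %/ n k)%N; rewrite -(divnK (nL k)) -/q.
  have := n_gt0 k; nia.
- rewrite Mmul_chain_v subr0 mulr1 -natz natr_sum; apply: eq_bigr => k _.
  by rewrite chain_potential_vertex ?n_gt0 //= subr0 mul1n natz.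
- rewrite subrr mulr0 -(chain_vertex_inner lt_t) Mmul_chain_inner; last by lia.
  rewrite !chain_potential_vertex //; lia.
Qed.

Lemma chain_potential_drop (S : chainV n -> int) (m : nat) :
  (forall x, Mmul (@chain_c d n) S x = hdiff m (chain_v n) (chain_w n) x) ->
  forall k, S (chain_w n) - S (chain_v n) =
            (n k)%:Z * (S (chain_vertex n k 1) - S (chain_v n)).
Proof.
move=> HS k; have n_pos := n_gt0 k.
have harmonic t : (t.+1 < n k)%N ->
    S (chain_vertex n k t.+2) - S (chain_vertex n k t.+1) =
    S (chain_vertex n k t.+1) - S (chain_vertex n k t).
  move=> lt_t; move: (HS (chain_vertex n k t.+1)); rewrite Mmul_chain_inner //.
  rewrite /hdiff chain_vertexS_neq_v chain_vertex_eq_w ?(ltnW lt_t) //.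
  by rewrite ltn_eqF //= subrr mulr0 => /eqP; rewrite addr_eq0 opprB => /eqP.
have /eqP <- : chain_vertex n k (n k) == chain_w n by rewrite chain_vertex_eq_w.
by rewrite (harmonic_linear harmonic (leqnn _)) -mulr_natl natz.
Qed.

End Chains.

Lemma lcm_harmonic_sum (d : nat) (n : 'I_d -> nat) (L : nat) :
  (forall k, n k %| L)%N ->
  L%:Q * \sum_k ((n k)%:Q)^-1 = (\sum_k L %/ n k)%N%:Q.
Proof.
move=> nL; rewrite -!pmulrn mulr_sumr natr_sum; apply: eq_bigr => k _.
by rewrite natf_div.
Qed.

Lemma biglcmn_gt0 (I : finType) (P : pred I) (F : I -> nat) :
  (forall i, P i -> 0 < F i)%N -> (0 < \big[lcmn/1%N]_(i | P i) F i)%N.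
Proof.
move=> F_gt0; apply: (big_ind (fun m => 0 < m)%N) => // a b a_gt0 b_gt0.
by rewrite lcmn_gt0 a_gt0.
Qed.

Lemma sum_biglcm_div_le (d : nat) (n : 'I_d -> nat) (D : int)
    (s : 'I_d -> int) :
  (forall k, 0 < n k)%N -> (forall k, D = (n k)%:Z * s k) -> 0 < \sum_k s k ->
  ((\sum_k (\big[lcmn/1%N]_(i < d) n i) %/ n k)%N)%:Z <= \sum_k s k.
Proof.
move=> n_gt0 Ds s_gt0; set L := \big[lcmn/1%N]_(i < d) n i.
have nL k : (n k %| L)%N by apply: (biglcmn_sup k).
have L_gt0 : (0 < L)%N by apply: biglcmn_gt0.
have DhLs : D * ((\sum_k L %/ n k)%N)%:Z = L%:Z * \sum_k s k.
  rewrite -natz natr_sum !mulr_sumr; apply: eq_bigr => k _.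
  by rewrite (Ds k) mulrAC natz -PoszM mulnC divnK.
have L_dvd_D : (L %| `|D|)%N.
  by apply/dvdn_biglcmP => k _; rewrite (Ds k) abszM absz_nat dvdn_mulr.
have D_gt0 : 0 < D by nia.
have L_le_D : (L <= `|D|)%N by apply: dvdn_leq; rewrite // absz_gt0 lt0r_neq0.
move: DhLs L_le_D; rewrite -(gez0_abs (ltW D_gt0)); move: `|D|%N => D'.
nia.
Qed.

Theorem claim2p6 (d : nat) (n : 'I_d -> nat) (h : nat) :
  (1 <= d)%N -> (forall k, 1 <= n k)%N ->
  h%:Q = (\big[lcmn/1%N]_(k < d) n k)%:Q * (\sum_(k < d) ((n k)%:Q)^-1) ->
  pair_order (@chain_c d n) (chain_v n) (chain_w n) h.
Proof.
move=> d_gt0 n_gt0 Eh.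
set L := \big[lcmn/1%N]_(k < d) n k in Eh.
have nL k : (n k %| L)%N by apply: (biglcmn_sup k).
have {Eh}-> : h = (\sum_k L %/ n k)%N.
  by apply/eqP; rewrite -eqz_nat -(eqr_int rat) Eh lcm_harmonic_sum.
split; [|split].
- have L_gt0 : (0 < L)%N by apply: biglcmn_gt0.
  by rewrite (bigD1 (Ordinal d_gt0)) //= addn_gt0 divn_gt0 // dvdn_leq.
- by exists (chain_potential L); apply: chain_potential_solves.
move=> m /andP[m_gt0 lt_m] [S HS].
have Sv := HS (chain_v n); rewrite Mmul_chain_v // /hdiff /= subr0 mulr1 in Sv.
have := sum_biglcm_div_le n_gt0 (chain_potential_drop n_gt0 HS).
by rewrite Sv ltz_nat m_gt0 lez_nat leqNgt lt_m => /(_ isT).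
Qed.
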